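(* Assume the general coarsening setting described in the context. Then CAR(GCMP) holds if and only if CAR(REL) holds, where: CAR(GCMP) means that for all $(\theta,\psi)$ the random variable $\mathcal{L}^{\psi/\psi_0}_{\mathcal{R}|\mathcal{X}}$ is $\mathcal{O}$-measurable; and CAR(REL) means that for all $\psi$ there is a version $(r,x)\mapsto\mathcal{L}^{\psi/\psi_0}_{\mathcal{R}|\mathcal{X}}(r,x)$ (a measurable function of the paths of $(R,X)$) such that for every path $r$ of $R$ and all paths $x,x'$ of $X$ with $rx=rx'$ (i.e. $r_tx_t=r_tx'_t$ for all $t$) one has $\mathcal{L}^{\psi/\psi_0}_{\mathcal{R}|\mathcal{X}}(r,x)=\mathcal{L}^{\psi/\psi_0}_{\mathcal{R}|\mathcal{X}}(r,x')$.
   Context: Setting. On a measurable space $(\Omega,\mathcal{F})$ live two càdlàg stochastic processes: $X=(X_t)_{t\ge0}$ with values in $\mathbb{R}^d$ (path space a Skorohod space with its Borel $\sigma$-field) and a response indicator process $R=(R_t)_{t\ge0}$ with values in $\{0,1\}$ (componentwise), $R_t=1$ meaning $X_t$ is observed. Let $\mathcal{X}=\sigma(X_t,t\ge0)$, $\mathcal{R}=\sigma(R_t,t\ge0)$, $\mathcal{F}=\mathcal{X}\vee\mathcal{R}$. A model is a family $\{P_{(\theta,\psi)}:(\theta,\psi)\in\Theta\times\Psi\}$ of mutually equivalent probability measures on $\mathcal{F}$ with reference measure $P_{(\theta_0,\psi_0)}$; the restriction of $P_{(\theta,\psi)}$ to $\mathcal{X}$ depends only on $\theta$. Non-informativeness: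 $P_{(\theta_1,\psi)}(A\mid\mathcal{X})=P_{(\theta_2,\psi)}(A\mid\mathcal{X})$ a.s. for all $A\in\mathcal{R}$, all $\theta_1,\theta_2,\psi$. For a sub-$\sigma$-field $\mathcal{G}$, $\mathcal{L}^{(\theta,\psi)/(\theta_0,\psi_0)}_{\mathcal{G}}$ is the Radon–Nikodym derivative $dP_{(\theta,\psi)}/dP_{(\theta_0,\psi_0)}$ restricted to $\mathcal{G}$. The conditional likelihood ratio of $\mathcal{Y}$ given $\mathcal{G}$ is the $\mathcal{G}\vee\mathcal{Y}$-measurable variable $\mathcal{L}_{\mathcal{Y}|\mathcal{G}}=\mathcal{L}_{\mathcal{G}\vee\mathcal{Y}}/\mathcal{L}_{\mathcal{G}}$ (it satisfies $E_{(\theta,\psi)}[1_A\mid\mathcal{G}]=E_{(\theta_0,\psi_0)}[1_A\mathcal{L}_{\mathcal{Y}|\mathcal{G}}\mid\mathcal{G}]$ for $A\in\mathcal{Y}$). By non-informativeness $\mathcal{L}^{(\theta,\psi)/(\theta_0,\psi_0)}_{\mathcal{R}|\mathcal{X}}$ does not depend on $\theta$ and is denoted $\mathcal{L}^{\psi/\psi_0}_{\mathcal{R}|\mathcal{X}}$. The observed $\sigma$-field is $\mathcal{O}=\sigma(R_tX_t,R_t,\ t\ge0)$. *)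

From HB Require Import structures.
From mathcomp Require Import all_boot all_order all_algebra.
From mathcomp Require Import all_classical all_reals all_analysis.
Set Implicit Arguments. Unset Strict Implicit. Unset Printing Implicit Defensive.
Import Order.TTheory GRing.Theory Num.Theory.
Import numFieldNormedType.Exports.
Local Open Scope classical_set_scope.
Local Open Scope ring_scope.

(* A path of an R^n-valued process: t |-> (i |-> x_t^i).  Only times t >= 0
   are relevant (all notions below only look at t >= 0). *)
Definition ppath (R : realType) (n : nat) := R -> 'I_n -> R.

(* càdlàg on [0, oo): right-continuous at every t >= 0, left limits at every t > 0
   (componentwise, which is the same as in R^n). *)
Definition cadlag (R : realType) (n : nat) (x : ppath R n) : Prop :=
  forall (i : 'I_n) (t : R), 0 <= t ->
    ((fun s => x s i) @ at_right t --> x t i) /\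
    (0 < t -> cvg ((fun s => x s i) @ at_left t)).

Definition is_Rpath (R : realType) (n : nat) (r : ppath R n) : Prop :=
  cadlag r /\ forall (i : 'I_n) (t : R), 0 <= t -> r t i = 0 \/ r t i = 1.

Definition gen_of (U : Type) (R : realType) (F : (U -> R) -> Prop) : set (set U) :=
  <<s [set A | exists f B, F f /\ measurable B /\ A = f @^-1` B] >>.

Definition Gmeas (U : Type) (R : realType) (G : set (set U)) (f : U -> R) : Prop :=
  forall B : set R, measurable B -> G (f @^-1` B).

Definition trace_meas (U : Type) (R : realType) (D : set U) (G : set (set U))
  (h : U -> R) : Prop :=
  forall B : set R, measurable B -> exists A, G A /\ D `&` h @^-1` B = D `&` A.

Section Setting.
Context (R : realType) (n : nat) (d : measure_display) (T : measurableType d).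

Definition sigma_path (Y : T -> ppath R n) : set (set T) :=
  gen_of (fun f : T -> R => exists (t : R) (i : 'I_n), 0 <= t /\ f = fun w => Y w t i).

Definition sigma_XR (X Rr : T -> ppath R n) : set (set T) :=
  gen_of (fun f : T -> R => exists (t : R) (i : 'I_n), 0 <= t /\
            (f = (fun w => X w t i) \/ f = (fun w => Rr w t i))).

Definition sigma_obs (X Rr : T -> ppath R n) : set (set T) :=
  gen_of (fun f : T -> R => exists (t : R) (i : 'I_n), 0 <= t /\
            (f = (fun w => Rr w t i * X w t i) \/ f = (fun w => Rr w t i))).

Definition RN_version (G : set (set T)) (P Q : probability T R) (f : T -> R) : Prop :=
  Gmeas G f /\ (forall w, 0 <= f w) /\
  forall A, G A -> (P A = \int[Q]_(w in A) (f w)%:E)%E.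

Definition condprob_version (G : set (set T)) (P : probability T R) (A : set T)
  (g : T -> R) : Prop :=
  Gmeas G g /\ forall B, G B -> (P (A `&` B) = \int[P]_(w in B) (g w)%:E)%E.

Definition coarsening_setting (Theta Psi : Type) (th0 : Theta) (ps0 : Psi)
  (P : Theta -> Psi -> probability T R) (X Rr : T -> ppath R n) : Prop :=
  [/\
      (forall w, cadlag (X w) /\ is_Rpath (Rr w)),
      (@measurable d T = sigma_XR X Rr),
      (forall th ps A, measurable A -> (P th ps A = 0%E <-> P th0 ps0 A = 0%E)),
      (forall th ps ps' A, sigma_path X A -> P th ps A = P th ps' A) &
      (forall th1 th2 ps A g1 g2, sigma_path Rr A ->
         condprob_version (sigma_path X) (P th1 ps) A g1 ->
         condprob_version (sigma_path X) (P th2 ps) A g2 ->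
         {ae P th0 ps0, forall w, g1 w = g2 w})].

(* g is a version of the conditional likelihood ratio
   L_{R|X} = L_{X v R} / L_X of P_(th,ps) w.r.t. P_(th0,ps0) *)
Definition condLR_version (Theta Psi : Type) (th0 : Theta) (ps0 : Psi)
  (P : Theta -> Psi -> probability T R) (X : T -> ppath R n)
  (th : Theta) (ps : Psi) (g : T -> R) : Prop :=
  measurable_fun setT g /\
  exists fF fX, RN_version measurable (P th ps) (P th0 ps0) fF /\
    RN_version (sigma_path X) (P th ps) (P th0 ps0) fX /\
    {ae P th0 ps0, forall w, g w = fF w / fX w}.

Definition CAR_GCMP (Theta Psi : Type) (th0 : Theta) (ps0 : Psi)
  (P : Theta -> Psi -> probability T R) (X Rr : T -> ppath R n) : Prop :=
  forall th ps, exists g, condLR_version th0 ps0 P X th ps g /\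
    Gmeas (sigma_obs X Rr) g.

Definition sigma_pairs : set (set (ppath R n * ppath R n)) :=
  gen_of (fun f : ppath R n * ppath R n -> R => exists (t : R) (i : 'I_n), 0 <= t /\
            (f = (fun p => p.1 t i) \/ f = (fun p => p.2 t i))).

Definition CAR_REL (Theta Psi : Type) (th0 : Theta) (ps0 : Psi)
  (P : Theta -> Psi -> probability T R) (X Rr : T -> ppath R n) : Prop :=
  forall ps, exists h : ppath R n -> ppath R n -> R,
    trace_meas [set p | is_Rpath p.1 /\ cadlag p.2] sigma_pairs
               (fun p => h p.1 p.2) /\
    (forall th, condLR_version th0 ps0 P X th ps (fun w => h (Rr w) (X w))) /\
    (forall r x x', is_Rpath r -> cadlag x -> cadlag x' ->
       (forall t i, 0 <= t -> r t i * x t i = r t i * x' t i) -> h r x = h r x').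

End Setting.

(** CAR(GCMP) => CAR(REL): an [O]-measurable version [g] of [L_{R|X}] factors, by the
Doob-Dynkin lemma, through [w |-> (R w, R w * X w)], i.e. [g = k (R, R X)]; then
[h r x := k (r, r x)] is a version that only depends on [(r, r x)].  It is a version
for every [theta] because [L_{R|X}] does not depend on [theta]: for [A] in [sigma(R)]
and [B] in [sigma(X)], non-informativeness [P_theta(A | X) = P_theta'(A | X)] gives
[P_theta'(A `&` B) = int_(A `&` B) L^theta_{R|X} L^theta'_X dP_0], and these
rectangles form a pi-system generating [F], so [L^theta_{R|X} L^theta'_X] is a
density of [P_theta'].
CAR(REL) => CAR(GCMP): as [r] takes values in [{0, 1}], [r (r x) = r x], hence
[h(R, X) = h(R, R X)] is a measurable function of the observed process. *)

From HB Require Import structures.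
From mathcomp Require Import all_boot all_order all_algebra.
From mathcomp Require Import all_classical all_reals all_analysis.
From mathcomp Require Import measurable_realfun.
Set Implicit Arguments. Unset Strict Implicit. Unset Printing Implicit Defensive.
Import Order.TTheory GRing.Theory Num.Theory.
Import numFieldNormedType.Exports.
Local Open Scope classical_set_scope.
Local Open Scope ring_scope.

Section generated_sigma_algebra.
Context (R : realType).

(* [gen_of F] unfolds to [<<s gen_preimages F >>], the measurable sets of
   [g_sigma_algebraType (gen_preimages F)]. *)
Definition gen_preimages (U : Type) (F : (U -> R) -> Prop) : set (set U) :=
  [set A | exists f B, F f /\ measurable B /\ A = f @^-1` B].

Lemma gen_of_sub (U : Type) (F : (U -> R) -> Prop) (G : set (set U)) :
  sigma_algebra setT G -> (forall f B, F f -> measurable B -> G (f @^-1` B)) ->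
  gen_of F `<=` G.
Proof. by move=> sG FG; apply: smallest_sub => // _ [f [B [Ff [mB ->]]]]; exact: FG. Qed.

Lemma Gmeas_gen_of (U : Type) (F : (U -> R) -> Prop) f : F f -> Gmeas (gen_of F) f.
Proof. by move=> Ff B mB; apply: sub_sigma_algebra; exists f, B. Qed.

Lemma GmeasP (U : pointedType) (G : set (set U)) (h : U -> R) :
  Gmeas <<s G >> h <-> measurable_fun [set: g_sigma_algebraType G] h.
Proof.
split => [mh _ B mB|mh B mB]; first by rewrite setTI; exact: mh.
by rewrite -[_ @^-1` B]setTI; exact: mh.
Qed.

Lemma gen_of_monotone (U : Type) (F1 F2 : (U -> R) -> Prop) :
  (forall f, F1 f -> F2 f) -> gen_of F1 `<=` gen_of F2.
Proof.
move=> F12; apply: gen_of_sub; first exact: smallest_sigma_algebra.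
by move=> f B /F12 F2f mB; exact: Gmeas_gen_of.
Qed.

Lemma gen_of_preimage (T U : Type) (phi : T -> U)
    (FT : (T -> R) -> Prop) (FU : (U -> R) -> Prop) :
  (forall u, FU u -> Gmeas (gen_of FT) (u \o phi)) ->
  forall A, gen_of FU A -> gen_of FT (phi @^-1` A).
Proof.
move=> FUT A; rewrite -[phi @^-1` A]setTI.
apply: (gen_of_sub (G := image_set_system setT phi (gen_of FT))) A.
  exact/sigma_algebra_image/smallest_sigma_algebra.
by move=> u B FUu mB; rewrite /image_set_system /= setTI; exact: (FUT u FUu B mB).
Qed.

Lemma gen_of_factor (T U : Type) (phi : T -> U)
    (FT : (T -> R) -> Prop) (FU : (U -> R) -> Prop) :
  (forall f, FT f -> exists2 u, FU u & f = u \o phi) ->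
  forall A, gen_of FT A -> exists2 A', gen_of FU A' & A = phi @^-1` A'.
Proof.
move=> FTU A /(gen_of_sub (G := preimage_set_system setT phi (gen_of FU))).
case=> [|f B /FTU[u FUu ->] mB|A' FUA' <-]; last by exists A'; rewrite ?setTI.
  exact/sigma_algebra_preimage/smallest_sigma_algebra.
by exists (u @^-1` B); rewrite ?setTI //; exact: Gmeas_gen_of.
Qed.

Lemma measurable_ereal_inf_rat d (U : measurableType d) (A : rat -> set U) :
  (forall q, measurable (A q)) ->
  measurable_fun setT (fun u => ereal_inf [set (ratr q : R)%:E | q in [set q | A q u]]).
Proof.
move=> mA; apply: measurability; first exact: ErealGenInftyO.measurableE.
move=> _ [_ [r ->] <-]; rewrite setTI.
suff -> : (fun u => ereal_inf [set (ratr q)%:E | q in [set q | A q u]]) @^-1`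
    `]-oo, r%:E[ = \bigcup_q (if ratr q < r then A q else set0).
  by apply: bigcupT_measurable_rat => q; case: ifP.
apply/seteqP; split => u /=; rewrite in_itv /=.
  by move=> /ereal_inf_lt[_ [q Aqu <-]]; rewrite lte_fin => qr; exists q; rewrite ?qr.
case=> q _; case: ifPn => // qr Aqu; apply: le_lt_trans (ereal_inf_lbound _) _.
  by exists q.
by rewrite lte_fin.
Qed.

Lemma ereal_inf_rat_gt (x : R) (P : rat -> Prop) :
  (forall q, P q <-> x < ratr q) -> ereal_inf [set (ratr q)%:E | q in P] = x%:E.
Proof.
move=> Px; apply/eqP; rewrite eq_le; apply/andP; split.
  apply/lee_addgt0Pr => e e0.
  have [q] : exists q : rat, ratr q \in `]x, x + e[ by apply: rat_in_itvoo; rewrite ltrDl.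
  rewrite in_itv /= => /andP[xq qxe].
  apply: le_trans (ereal_inf_lbound _) _; first by exists q; rewrite ?Px.
  by rewrite -EFinD lee_fin ltW.
by apply: le_ereal_inf_tmp => _ [q /Px xq <-]; rewrite lee_fin ltW.
Qed.

Lemma factor_measurable d (T : Type) (U : measurableType d) (phi : T -> U) (g : T -> R) :
  (forall q : rat, exists A, measurable A /\ phi @^-1` A = g @^-1` `]-oo, ratr q[) ->
  exists2 k : U -> R, measurable_fun setT k & g = k \o phi.
Proof.
move=> /choice[A /all_and2[mA phiA]].
(* [A q] pulls back to [{g < q}], so [g w] is the infimum of the [q] with [A q (phi w)]. *)
pose k' u := ereal_inf [set (ratr q : R)%:E | q in [set q | A q u]].
exists (fine \o k'); first exact/measurableT_comp/measurable_ereal_inf_rat.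
apply/funext => w /=; rewrite /k' (@ereal_inf_rat_gt (g w)) // => q.
by rewrite /= -[A q _]/((phi @^-1` A q) w) phiA /= in_itv.
Qed.

Lemma doob_dynkin (T : Type) (U : pointedType) (phi : T -> U)
    (FT : (T -> R) -> Prop) (FU : (U -> R) -> Prop) (g : T -> R) :
  (forall f, FT f -> exists2 u, FU u & f = u \o phi) ->
  Gmeas (gen_of FT) g -> exists2 k : U -> R, Gmeas (gen_of FU) k & g = k \o phi.
Proof.
move=> FTU mg.
have [|k mk ->] := @factor_measurable _ _ (g_sigma_algebraType (gen_preimages FU)) phi g.
  move=> q; have [A' FUA' gA] := gen_of_factor FTU (mg _ (@measurable_itv _ `]-oo, ratr q[)).
  by exists A'; split.
by exists k => // B mB; rewrite -[_ @^-1` B]setTI; exact: mk.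
Qed.

End generated_sigma_algebra.

Local Open Scope ereal_scope.

Section finite_pushforward.
Context d d' (T : measurableType d) (T' : measurableType d') (R : realType).
Variables (mu : {finite_measure set T -> \bar R}) (f : {mfun T >-> T'}).

Definition fpushforward := pushforward mu f.

Let fpushforward_measure : {measure set T' -> \bar R}.
Proof.
by refine (pushforward mu f : {measure set T' -> \bar R}); exact: measurable_funPT.
Defined.

HB.instance Definition _ := Measure.copy fpushforward fpushforward_measure.

Let fpushforward_fin : fin_num_fun fpushforward.
Proof.
move=> U mU; rewrite /fpushforward /pushforward fin_num_measure//.
by rewrite -[X in measurable X]setTI; exact: measurable_funPT.
Qed.

HB.instance Definition _ := Measure_isFinite.Build _ _ _ fpushforward fpushforward_fin.

Lemma ge0_integral_fpushforward (D : set T') (h : T' -> \bar R) : measurable D ->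
  measurable_fun setT h -> (forall y, 0 <= h y) ->
  \int[fpushforward]_(y in D) h y = \int[mu]_(x in f @^-1` D) h (f x).
Proof.
by move=> mD mh h0; rewrite ge0_integral_pushforward//; exact: measurable_funTS.
Qed.

End finite_pushforward.

Section density_measure.
Context d (T : measurableType d) (R : realType).
Variables (mu : {measure set T -> \bar R}) (h : T -> \bar R).
Hypotheses (mh : measurable_fun setT h) (h0 : forall x, 0 <= h x).

(* The hypotheses are arguments so that the instance below applies to every
   [density_measure mu mh h0]. *)
Definition density_measure & measurable_fun setT h & (forall x, 0 <= h x) :=
  fun A => \int[mu]_(x in A) h x.

Local Notation hmu := (density_measure mh h0).

Let density_measure0 : hmu set0 = 0.
Proof. by rewrite /density_measure integral_set0. Qed.

Let density_measure_ge0 A : 0 <= hmu A.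
Proof. by apply: integral_ge0 => x _; exact: h0. Qed.

Let density_measure_sigma_additive : semi_sigma_additive hmu.
Proof. exact: semi_sigma_additive_nng_induced. Qed.

HB.instance Definition _ := isMeasure.Build _ _ _ hmu
  density_measure0 density_measure_ge0 density_measure_sigma_additive.

End density_measure.

Lemma integral_density d (T : measurableType d) (R : realType)
    (nu : {finite_measure set T -> \bar R})
    (mu : {sigma_finite_measure set T -> \bar R}) (f : T -> \bar R) :
  measurable_fun setT f -> (forall x, 0 <= f x) ->
  (forall E, measurable E -> nu E = \int[mu]_(x in E) f x) ->
  forall (phi : T -> \bar R) E, measurable E -> measurable_fun setT phi ->
  (forall x, 0 <= phi x) ->
  \int[nu]_(x in E) phi x = \int[mu]_(x in E) (phi x * f x).
Proof.
move=> mf f0 nuf phi E mE mphi phi0.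
have numu : nu `<< mu.
  apply/null_content_dominatesP => A mA muA.
  by rewrite nuf// null_set_integral//; exact: measurable_funTS.
rewrite -(Radon_Nikodym_SigmaFinite.change_of_variables numu phi0 mE
  (measurable_funTS mphi)).
have intRN := Radon_Nikodym_SigmaFinite.f_integrable numu.
apply: ge0_ae_eq_integral => //.
- apply: emeasurable_funM; first exact: measurable_funTS.
  exact: measurable_funTS (measurable_int _ intRN).
- by apply: emeasurable_funM; exact: measurable_funTS.
- by move=> x _; apply: mule_ge0 => //; exact: Radon_Nikodym_SigmaFinite.f_ge0.
- by move=> x _; exact: mule_ge0.
(* the Radon-Nikodym derivative of [nu] is [f] up to a [mu]-null set *)
apply: ae_eqe_mul2l; apply: (integral_ae_eq mE).
- exact: integrableS intRN.
- exact: measurable_funTS.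
- by move=> F FE mF; rewrite -Radon_Nikodym_SigmaFinite.f_integral// nuf.
Qed.

Lemma integral_mfrestr d (T : measurableType d) (R : realType)
    (mu : {sigma_finite_measure set T -> \bar R}) (A : set T) (mA : measurable A)
    (muAoo : mu A < +oo) (phi : T -> \bar R) B :
  measurable B -> measurable_fun setT phi -> (forall x, 0 <= phi x) ->
  \int[mfrestr mA muAoo]_(x in B) phi x = \int[mu]_(x in A `&` B) phi x.
Proof.
move=> mB mphi phi0.
have mA1 : measurable_fun setT (fun x => (\1_A x : R)%:E).
  by apply/measurable_EFinP; exact: measurable_indic.
have A1_ge0 x : 0 <= (\1_A x : R)%:E by rewrite lee_fin.
have restrE E : measurable E -> mfrestr mA muAoo E = \int[mu]_(x in E) (\1_A x : R)%:E.
  by move=> mE; rewrite integral_indic// /mfrestr /mrestr setIC.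
rewrite (integral_density mA1 A1_ge0 restrE mB mphi phi0) setIC integral_mkcondr.
apply: eq_integral => x _; rewrite patchE indicE.
by case: ifP => _; rewrite ?mule1 ?mule0.
Qed.

Section sub_sigma_algebra.
Context d (T : measurableType d) (R : realType) (G : set (set T)).
Hypothesis sub_G : <<s G >> `<=` @measurable _ T.

Local Notation TG := (g_sigma_algebraType G).

Definition to_sub : T -> TG := id.

Lemma measurable_to_sub : measurable_fun setT to_sub.
Proof. by move=> _ B mB; rewrite setTI; exact: sub_G. Qed.

HB.instance Definition _ := isMeasurableFun.Build _ _ T TG to_sub measurable_to_sub.

Lemma Gmeas_measurable_fun (h : T -> R) : Gmeas <<s G >> h -> measurable_fun setT h.
Proof. by move=> mh _ B mB; rewrite setTI; apply: sub_G; exact: mh. Qed.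

Lemma RN_version_integral (P Q : probability T R) (fX : T -> R) :
  RN_version <<s G >> P Q fX ->
  forall psi : T -> R, (forall x, (0 <= psi x)%R) -> Gmeas <<s G >> psi ->
  forall B, <<s G >> B ->
  \int[P]_(x in B) (psi x)%:E = \int[Q]_(x in B) (psi x * fX x)%:E.
Proof.
move=> [/GmeasP mfX [fX0 PfX]] psi psi0 /GmeasP mpsi B GB.
have mB : measurable (B : set TG) := GB.
have mfXE : measurable_fun [set: TG] (fun x => (fX x)%:E) by exact/measurable_EFinP.
have mpsiE : measurable_fun [set: TG] (fun x => (psi x)%:E) by exact/measurable_EFinP.
have fX0E x : 0 <= (fX x)%:E by rewrite lee_fin.
have psi0E x : 0 <= (psi x)%:E by rewrite lee_fin.
have PQ E : measurable (E : set TG) ->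
    distribution P to_sub E = \int[distribution Q to_sub]_(x in E) (fX x)%:E.
  move=> mE; rewrite ge0_integral_pushforward ?(in1W fX0E)//; last exact: measurable_funTS.
  by rewrite /distribution /pushforward /=; exact: PfX.
rewrite -[LHS](ge0_integral_pushforward measurable_to_sub _ mB (measurable_funTS mpsiE)
  (in1W psi0E)).
rewrite (integral_density mfXE fX0E PQ mB mpsiE psi0E) ge0_integral_pushforward//.
- exact/measurable_funTS/emeasurable_funM.
- by move=> x _; exact: mule_ge0.
Qed.

Section condprob.
Variables (P : probability T R) (A : set T) (mA : measurable A).

Let PAoo : P A < +oo.
Proof. exact: le_lt_trans (probability_le1 P mA) (ltry _). Qed.

Let nuA := fpushforward (mfrestr mA PAoo) to_sub.
Let muG := distribution P to_sub.

Let nuA_dominated : nuA `<< muG.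
Proof.
apply/null_content_dominatesP => E mE muE.
have PE0 : P E = 0 := muE.
apply: (subset_measure0 _ _ _ PE0); last exact: subIsetl.
  by apply: measurableI => //; exact: sub_G.
exact: sub_G.
Qed.

Let RN := Radon_Nikodym_SigmaFinite.f nuA muG.

Let measurable_RN : measurable_fun setT RN.
Proof. exact: measurable_int (Radon_Nikodym_SigmaFinite.f_integrable nuA_dominated). Qed.

Let RN_ge0 x : 0 <= RN x.
Proof. exact: Radon_Nikodym_SigmaFinite.f_ge0 nuA_dominated x. Qed.

(* [P(A | <<s G >>)], as the density of [B |-> P (A `&` B)] w.r.t. [P] on [<<s G >>] *)
Definition condprob : T -> R := fun x => fine (RN x).

Let condprobE x : (condprob x)%:E = RN x.
Proof. by rewrite fineK//; exact: Radon_Nikodym_SigmaFinite.f_fin_num nuA_dominated x. Qed.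

Lemma condprob_ge0 x : (0 <= condprob x)%R.
Proof. by rewrite -lee_fin condprobE. Qed.

Lemma Gmeas_condprob : Gmeas <<s G >> condprob.
Proof.
by apply/GmeasP; exact: measurableT_comp (fine_measurable measurableT) measurable_RN.
Qed.

Lemma condprob_version_condprob : condprob_version <<s G >> P A condprob.
Proof.
split; first exact: Gmeas_condprob.
move=> B GB; rewrite setIC.
transitivity (\int[muG]_(x in B) RN x).
  exact: (Radon_Nikodym_SigmaFinite.f_integral nuA_dominated (GB : measurable (B : set TG))).
rewrite ge0_integral_pushforward//; last exact: measurable_funTS.
by apply: (eq_integral (D := B)) => x _; rewrite condprobE.
Qed.

Lemma integral_condprob (rho : T -> R) : (forall x, (0 <= rho x)%R) ->
  Gmeas <<s G >> rho -> forall B, <<s G >> B ->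
  \int[P]_(x in A `&` B) (rho x)%:E = \int[P]_(x in B) (rho x * condprob x)%:E.
Proof.
move=> rho0 mrho B GB.
have mB : measurable (B : set TG) := GB.
have rho0E x : 0 <= (rho x)%:E by rewrite lee_fin.
have mrhoG : measurable_fun [set: TG] (fun x => (rho x)%:E) by exact/measurable_EFinP/GmeasP.
have mrhoT : measurable_fun setT (fun x => (rho x)%:E).
  exact/measurable_EFinP/Gmeas_measurable_fun.
rewrite -(integral_mfrestr mA PAoo (sub_G GB) mrhoT rho0E).
rewrite -[LHS](ge0_integral_fpushforward _ to_sub mB mrhoG rho0E).
rewrite -(Radon_Nikodym_SigmaFinite.change_of_variables nuA_dominated rho0E mB
  (measurable_funTS mrhoG)).
rewrite ge0_integral_pushforward//.
- by apply: (eq_integral (D := B)) => x _; rewrite EFinM condprobE.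
- by apply: measurable_funTS; exact: emeasurable_funM.
- by move=> x _; exact: mule_ge0.
Qed.

End condprob.
End sub_sigma_algebra.

Section radon_nikodym_versions.
Context d (T : measurableType d) (R : realType).
Implicit Types (P Q : probability T R) (G : set (set T)).

Lemma GmeasT (f : T -> R) : Gmeas measurable f <-> measurable_fun setT f.
Proof.
split => [mf _ B mB|mf B mB]; first by rewrite setTI; exact: mf.
by rewrite -[_ @^-1` B]setTI; exact: mf.
Qed.

Lemma RN_version_integralT P Q (fF : T -> R) : RN_version measurable P Q fF ->
  forall phi : T -> R, (forall x, (0 <= phi x)%R) -> measurable_fun setT phi ->
  forall C, measurable C ->
  \int[P]_(x in C) (phi x)%:E = \int[Q]_(x in C) (phi x * fF x)%:E.
Proof.
have smT := sigma_algebra_id (@sigma_algebra_measurable _ T).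
move=> PfF phi phi0 /GmeasT mphi C mC.
by apply: (RN_version_integral (G := measurable)); rewrite ?smT.
Qed.

Lemma RN_version_neq0 G P Q (f : T -> R) : G `<=` measurable ->
  (forall N, measurable N -> P N = 0 -> Q N = 0) ->
  RN_version G P Q f -> {ae Q, forall x, f x != 0%R}.
Proof.
move=> GF PQ [mf [_ Pf]].
have Gf0 : G (f @^-1` [set 0%R]) := mf _ (measurable_set1 0%R).
have P0 : P (f @^-1` [set 0%R]) = 0 by rewrite Pf//; apply: integral0_eq => x /= ->.
exists (f @^-1` [set 0%R]); split; [exact: GF|exact: PQ (GF _ Gf0) P0|].
by move=> x /= /negP; rewrite negbK => /eqP.
Qed.

Lemma RN_version_ae_unique (G : set (set T)) P Q (fF h : T -> R) :
  measurable = <<s G >> -> setI_closed G -> G setT ->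
  RN_version measurable P Q fF ->
  measurable_fun setT h -> (forall x, (0 <= h x)%R) ->
  (forall C, G C -> P C = \int[Q]_(x in C) (h x)%:E) ->
  {ae Q, forall x, fF x = h x}.
Proof.
move=> mG GI GT [/GmeasT mfF [fF0 PfF]] mh h0 PGh.
have mhE : measurable_fun setT (fun x => (h x)%:E) by exact/measurable_EFinP.
have h0E x : 0 <= (h x)%:E by rewrite lee_fin.
have PE C : measurable C -> P C = density_measure Q mhE h0E C.
  apply: (measure_unique G (fun _ => setT) mG GI) => //.
  - by apply/seteqP; split => x // _; exists 0%N.
  - by move=> _; exact: le_lt_trans (probability_le1 _ measurableT) (ltry _).
have intfF : Q.-integrable setT (fun x => (fF x)%:E).
  apply/integrableP; split; first exact/measurable_EFinP.
  under eq_integral do rewrite gee0_abs ?lee_fin//.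
  by rewrite -PfF// probability_setT ltry.
have : ae_eq Q setT (fun x => (fF x)%:E) (fun x => (h x)%:E).
  by apply: integral_ae_eq => // E _ mE; rewrite -PfF// PE.
by apply: filterS => x /(_ I) [].
Qed.

End radon_nikodym_versions.

Lemma measurable_inv (R : realType) : measurable_fun [set: R] GRing.inv.
Proof.
rewrite -(setUv [set 0%R]) measurable_funU//; last exact: measurableC.
split; first exact: measurable_fun_set1.
apply: open_continuous_measurable_fun.
  exact/closed_openC/accessible_closed_set1/hausdorff_accessible/Rhausdorff.
by move=> x /set_mem /eqP x0; exact: inv_continuous.
Qed.

Definition rectangles (T : Type) (G1 G2 : set (set T)) : set (set T) :=
  [set A `&` B | A in G1 & B in G2].

Lemma setI_closed_rectangles (T : pointedType) (G1 G2 : set (set T)) :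
  setI_closed (rectangles <<s G1 >> <<s G2 >>).
Proof.
move=> _ _ [A1 GA1 [B1 GB1 <-]] [A2 GA2 [B2 GB2 <-]]; rewrite setIACA.
exists (A1 `&` A2); first exact: (@measurableI _ (g_sigma_algebraType G1)).
by exists (B1 `&` B2) => //; exact: (@measurableI _ (g_sigma_algebraType G2)).
Qed.

Lemma rectanglesT (T : pointedType) (G1 G2 : set (set T)) :
  rectangles <<s G1 >> <<s G2 >> setT.
Proof.
exists setT; first exact: (@measurableT _ (g_sigma_algebraType G1)).
by exists setT; [exact: (@measurableT _ (g_sigma_algebraType G2))|rewrite setIT].
Qed.

Section likelihood_ratio.
Context d (T : measurableType d) (R : realType) (GR GX : set (set T)).
Variables Q P1 P2 : probability T R.
Hypotheses (sub_R : <<s GR >> `<=` measurable) (sub_X : <<s GX >> `<=` measurable).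
Hypothesis mRX : measurable = <<s rectangles <<s GR >> <<s GX >> >>.
Hypotheses (P1Q : forall N, measurable N -> P1 N = 0 -> Q N = 0)
           (P2Q : forall N, measurable N -> P2 N = 0 -> Q N = 0).
Hypothesis non_informative : forall A g1 g2, <<s GR >> A ->
  condprob_version <<s GX >> P1 A g1 -> condprob_version <<s GX >> P2 A g2 ->
  {ae Q, forall x, g1 x = g2 x}.

Variables (fF1 fX1 fX2 : T -> R).
Hypotheses (P1fF1 : RN_version measurable P1 Q fF1)
  (P1fX1 : RN_version <<s GX >> P1 Q fX1) (P2fX2 : RN_version <<s GX >> P2 Q fX2).

Let rho x := (fX2 x / fX1 x)%R.

Let rho_ge0 x : (0 <= rho x)%R.
Proof. by case: P1fX1 => _ [fX1_ge0 _]; case: P2fX2 => _ [fX2_ge0 _]; exact: divr_ge0. Qed.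

Let Gmeas_rho : Gmeas <<s GX >> rho.
Proof.
case: P1fX1 => /GmeasP mfX1 _; case: P2fX2 => /GmeasP mfX2 _; apply/GmeasP.
exact: measurable_funM (measurableT_comp (@measurable_inv R) mfX1).
Qed.

Lemma density_on_rectangles A B : <<s GR >> A -> <<s GX >> B ->
  P2 (A `&` B) = \int[Q]_(x in A `&` B) (fF1 x / fX1 x * fX2 x)%:E.
Proof.
move=> GA GB; have mA := sub_R GA; have mB := sub_X GB.
pose c1 := condprob sub_X P1 mA; pose c2 := condprob sub_X P2 mA.
have c12 : {ae Q, forall x, c1 x = c2 x}.
  by apply: non_informative GA _ _; exact: condprob_version_condprob.
have fX1_neq0 := RN_version_neq0 sub_X P1Q P1fX1.
have [_ [fX1_ge0 _]] := P1fX1; have [_ [fX2_ge0 _]] := P2fX2.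
have rc1_ge0 x : (0 <= rho x * c1 x)%R by rewrite mulr_ge0 ?condprob_ge0.
have Gmeas_rc1 : Gmeas <<s GX >> (fun x => rho x * c1 x)%R.
  by apply/GmeasP/measurable_funM; apply/GmeasP; [exact: Gmeas_rho|exact: Gmeas_condprob].
(* [int_(A `&` B) rho fF1 dQ = int_(A `&` B) rho dP1 = int_B rho P1(A|X) dP1
    = int_B rho P1(A|X) fX1 dQ = int_B P2(A|X) fX2 dQ = P2 (A `&` B)] *)
symmetry; transitivity (\int[Q]_(x in A `&` B) (rho x * fF1 x)%:E).
  apply: eq_integral => x _; congr EFin.
  by rewrite /rho mulrAC [RHS]mulrAC (mulrC (fX2 x)).
rewrite -(RN_version_integralT P1fF1 rho_ge0 (Gmeas_measurable_fun sub_X Gmeas_rho)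
  (measurableI _ _ mA mB)).
rewrite (integral_condprob sub_X P1 mA rho_ge0 Gmeas_rho GB).
rewrite (RN_version_integral sub_X P1fX1 rc1_ge0 Gmeas_rc1 GB).
transitivity (\int[Q]_(x in B) (c2 x * fX2 x)%:E).
  apply: ge0_ae_eq_integral => //.
  - apply/measurable_funTS/measurable_EFinP/measurable_funM.
      exact: (Gmeas_measurable_fun sub_X Gmeas_rc1).
    exact: (Gmeas_measurable_fun sub_X (proj1 P1fX1)).
  - apply/measurable_funTS/measurable_EFinP/measurable_funM.
      exact: (Gmeas_measurable_fun sub_X (Gmeas_condprob _ _ _)).
    exact: (Gmeas_measurable_fun sub_X (proj1 P2fX2)).
  - by move=> x _; rewrite lee_fin mulr_ge0 ?fX1_ge0.
  - by move=> x _; rewrite lee_fin mulr_ge0 ?condprob_ge0 ?fX2_ge0.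
  apply: filterS2 c12 fX1_neq0 => x c12x fX1x _.
  by rewrite /rho c12x mulrAC divfK // mulrC.
rewrite -(RN_version_integral sub_X P2fX2 (condprob_ge0 _ _ _) (Gmeas_condprob _ _ _) GB).
by rewrite ((condprob_version_condprob sub_X P2 mA).2 B GB).
Qed.

Lemma conditional_likelihood_ratio_ae_eq (fF2 : T -> R) :
  RN_version measurable P2 Q fF2 ->
  {ae Q, forall x, (fF1 x / fX1 x = fF2 x / fX2 x)%R}.
Proof.
move=> P2fF2; have [/GmeasT mfF1 [fF1_ge0 _]] := P1fF1.
have [/(Gmeas_measurable_fun sub_X) mfX1 [fX1_ge0 _]] := P1fX1.
have [/(Gmeas_measurable_fun sub_X) mfX2 [fX2_ge0 _]] := P2fX2.
have mL : measurable_fun setT (fun x => fF1 x / fX1 x * fX2 x)%R.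
  apply: measurable_funM => //; apply: measurable_funM => //.
  exact: measurableT_comp (@measurable_inv R) mfX1.
have L_ge0 x : (0 <= fF1 x / fX1 x * fX2 x)%R by rewrite !mulr_ge0 ?invr_ge0.
have P2L C : rectangles <<s GR >> <<s GX >> C ->
    P2 C = \int[Q]_(x in C) (fF1 x / fX1 x * fX2 x)%:E.
  by move=> [A GA [B GB <-]]; exact: density_on_rectangles.
have := RN_version_ae_unique mRX (@setI_closed_rectangles _ _ _) (rectanglesT _ _)
  P2fF2 mL L_ge0 P2L.
apply: filterS2 (RN_version_neq0 sub_X P2Q P2fX2) => x fX2x ->.
by rewrite mulfK.
Qed.

End likelihood_ratio.

Local Open Scope ring_scope.

Definition observed_path (R : realType) (n : nat) (r x : ppath R n) : ppath R n :=
  fun t i => r t i * x t i.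

(* Unlike [observed_path], it only depends on the values at times [t >= 0];
   [observed_path] is used where the path has to stay cadlag. *)
Definition masked_path (R : realType) (n : nat) (r x : ppath R n) : ppath R n :=
  fun t i => if 0 <= t then r t i * x t i else 0.

Lemma cadlag_observed_path (R : realType) (n : nat) (r x : ppath R n) :
  cadlag r -> cadlag x -> cadlag (observed_path r x).
Proof.
move=> cr cx i t t0; have [r_right r_left] := cr i t t0; have [x_right x_left] := cx i t t0.
split; first exact: cvgM.
by move=> t_gt0; apply: is_cvgM; [exact: r_left|exact: x_left].
Qed.

Lemma masked_path_eq (R : realType) (n : nat) (r x x' : ppath R n) :
  (forall t i, 0 <= t -> r t i * x t i = r t i * x' t i) ->
  masked_path r x = masked_path r x'.
Proof.
move=> rxx'; apply/funext => t; apply/funext => i; rewrite /masked_path.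
by case: ifP => // /rxx' ->.
Qed.

Section coarsening.
Context (R : realType) (n : nat) (d : measure_display) (T : measurableType d)
  (Theta Psi : Type) (th0 : Theta) (ps0 : Psi)
  (P : Theta -> Psi -> probability T R) (X Rr : T -> ppath R n).
Hypothesis setting : coarsening_setting th0 ps0 P X Rr.

Local Notation Q := (P th0 ps0).

Lemma sigma_path_X_sub : sigma_path X `<=` measurable.
Proof.
case: setting => _ -> _ _ _; apply: gen_of_monotone.
by move=> f [t [i [t0 ->]]]; exists t, i; split => //; left.
Qed.

Lemma sigma_path_R_sub : sigma_path Rr `<=` measurable.
Proof.
case: setting => _ -> _ _ _; apply: gen_of_monotone.
by move=> f [t [i [t0 ->]]]; exists t, i; split => //; right.
Qed.

Lemma measurable_rectangles :
  measurable = <<s rectangles (sigma_path Rr) (sigma_path X) >>.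
Proof.
apply/seteqP; split; last first.
  apply: smallest_sub; first exact: sigma_algebra_measurable.
  by move=> _ [A /sigma_path_R_sub mA [B /sigma_path_X_sub mB <-]]; exact: measurableI.
case: setting => _ -> _ _ _; apply: gen_of_sub; first exact: smallest_sigma_algebra.
move=> f B [t [i [t0 [->|->]]]] mB; apply: sub_sigma_algebra.
- exists setT; first exact: (@measurableT _ (g_sigma_algebraType _)).
  exists ((fun w => X w t i) @^-1` B); last by rewrite setTI.
  by apply: Gmeas_gen_of => //; exists t, i.
- exists ((fun w => Rr w t i) @^-1` B); first by apply: Gmeas_gen_of => //; exists t, i.
  by exists setT; [exact: (@measurableT _ (g_sigma_algebraType _))|rewrite setIT].
Qed.

Lemma condLR_version_theta_free th th' ps g g' :
  condLR_version th0 ps0 P X th ps g -> condLR_version th0 ps0 P X th' ps g' ->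
  condLR_version th0 ps0 P X th' ps g.
Proof.
move=> [mg [fF1 [fX1 [P1fF1 [P1fX1 gE]]]]] [_ [fF2 [fX2 [P2fF2 [P2fX2 _]]]]].
split => //; exists fF2, fX2; split => //; split => //.
have [_ _ equiv _ non_informative] := setting.
have := conditional_likelihood_ratio_ae_eq sigma_path_R_sub sigma_path_X_sub
  measurable_rectangles (fun N mN => (equiv th ps N mN).1)
  (fun N mN => (equiv th' ps N mN).1) (non_informative th th' ps) P1fF1 P1fX1 P2fX2 P2fF2.
by apply: filterS2 gE => x -> ->.
Qed.

Lemma observable_condLR_version : CAR_GCMP th0 ps0 P X Rr -> forall ps, exists2 g,
  Gmeas (sigma_obs X Rr) g & forall th, condLR_version th0 ps0 P X th ps g.
Proof.
move=> gcmp ps; have [[th1 _]|Theta0] := pselect (exists th : Theta, True).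
  have [g [g_th1 mg]] := gcmp th1 ps; exists g => // th.
  by have [g' [g'_th _]] := gcmp th ps; exact: condLR_version_theta_free g_th1 g'_th.
exists (fun=> 0) => [|th]; last by case: Theta0; exists th.
by apply/(GmeasP (gen_preimages _)); exact: measurable_cst.
Qed.

Lemma Gmeas_masked_coordinates (u : ppath R n * ppath R n -> R) :
  (exists t i, 0 <= t /\ (u = (fun p => p.1 t i) \/ u = (fun p => p.2 t i))) ->
  Gmeas (@sigma_pairs R n) (u \o fun p => (p.1, masked_path p.1 p.2)).
Proof.
move=> [t [i [t0 [->|->]]]]; first by apply: Gmeas_gen_of; exists t, i; split => //; left.
have -> : (fun p : ppath R n * ppath R n => p.2 t i) \o
    (fun p => (p.1, masked_path p.1 p.2)) = (fun p => p.1 t i * p.2 t i).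
  by apply/funext => p /=; rewrite /masked_path t0.
apply/GmeasP; apply: measurable_funM; apply/GmeasP; apply: Gmeas_gen_of; exists t, i.
- by split => //; left.
- by split => //; right.
Qed.

Lemma CAR_REL_of_observable ps g : Gmeas (sigma_obs X Rr) g ->
  (forall th, condLR_version th0 ps0 P X th ps g) ->
  exists h : ppath R n -> ppath R n -> R,
    trace_meas [set p | is_Rpath p.1 /\ cadlag p.2] (@sigma_pairs R n) (fun p => h p.1 p.2) /\
    (forall th, condLR_version th0 ps0 P X th ps (fun w => h (Rr w) (X w))) /\
    (forall r x x', is_Rpath r -> cadlag x -> cadlag x' ->
       (forall t i, 0 <= t -> r t i * x t i = r t i * x' t i) -> h r x = h r x').
Proof.
move=> mg g_th.
pose phi w := (Rr w, masked_path (Rr w) (X w)).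
have [k mk gE] : exists2 k, Gmeas (@sigma_pairs R n) k & g = k \o phi.
  apply: doob_dynkin mg => f [t [i [t0 [->|->]]]].
  - exists (fun p => p.2 t i); first by exists t, i; split => //; right.
    by apply/funext => w; rewrite /phi /masked_path /= t0.
  - by exists (fun p => p.1 t i) => //; exists t, i; split => //; left.
exists (fun r x => k (r, masked_path r x)); split; [|split].
- move=> B mB; exists ((fun p => (p.1, masked_path p.1 p.2)) @^-1` (k @^-1` B)); split => //.
  exact: gen_of_preimage Gmeas_masked_coordinates _ (mk B mB).
- by move=> th; rewrite -[X in condLR_version _ _ _ _ _ _ X]/(k \o phi) -gE.
- by move=> r x x' _ _ _ /masked_path_eq ->.
Qed.

Lemma observable_of_CAR_REL (h : ppath R n -> ppath R n -> R) :
  trace_meas [set p | is_Rpath p.1 /\ cadlag p.2] (@sigma_pairs R n) (fun p => h p.1 p.2) ->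
  (forall r x x', is_Rpath r -> cadlag x -> cadlag x' ->
     (forall t i, 0 <= t -> r t i * x t i = r t i * x' t i) -> h r x = h r x') ->
  Gmeas (sigma_obs X Rr) (fun w => h (Rr w) (X w)).
Proof.
move=> htr hinv B mB; have [A [GA hA]] := htr B mB.
pose psi w := (Rr w, observed_path (Rr w) (X w)).
have [paths _ _ _ _] := setting.
have psiD w : is_Rpath (psi w).1 /\ cadlag (psi w).2.
  by have [cx [cr r01]] := paths w; split; [|exact: cadlag_observed_path].
have h_psi w : h (Rr w) (X w) = h (psi w).1 (psi w).2.
  have [cx [cr r01]] := paths w; apply: hinv => //; first exact: (psiD w).2.
  move=> t i t0; rewrite /psi /observed_path /= mulrA.
  by case: (r01 i t t0) => ->; rewrite ?mul0r ?mul1r.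
have -> : (fun w => h (Rr w) (X w)) @^-1` B = psi @^-1` A.
  apply/seteqP; split => w /= Bw.
    have : ([set p | is_Rpath p.1 /\ cadlag p.2] `&` (fun p => h p.1 p.2) @^-1` B) (psi w).
      by split; [exact: psiD|rewrite /= -h_psi].
    by rewrite hA => -[].
  have : ([set p | is_Rpath p.1 /\ cadlag p.2] `&` A) (psi w) by split; [exact: psiD|].
  by rewrite -hA => -[_ /=]; rewrite -h_psi.
apply: (gen_of_preimage _ GA) => u [t [i [t0 [->|->]]]]; apply: Gmeas_gen_of; exists t, i.
- by split => //; right.
- by split => //; left.
Qed.

End coarsening.

Theorem theorem1 (R : realType) (n : nat) (d : measure_display) (T : measurableType d)
  (Theta Psi : Type) (th0 : Theta) (ps0 : Psi)
  (P : Theta -> Psi -> probability T R) (X Rr : T -> ppath R n) :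
  coarsening_setting th0 ps0 P X Rr ->
  (CAR_GCMP th0 ps0 P X Rr <-> CAR_REL th0 ps0 P X Rr).
Proof.
move=> setting; split => [gcmp ps|rel th ps].
  have [g mg g_th] := observable_condLR_version setting gcmp ps.
  exact: CAR_REL_of_observable mg g_th.
have [h [htr [h_th hinv]]] := rel ps.
exists (fun w => h (Rr w) (X w)); split; first exact: h_th.
exact: (observable_of_CAR_REL setting htr hinv).
Qed.
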